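(* Let $s$ be a positive integer such that $(s-\bar k)>(\bar k+1)\big[(\sqrt{\rho_+(s)/\rho_-(s)}+1)\frac{2\rho_+(1)}{\rho_-(s)}\big]^2$, and run Algorithm FoBa-gdt with $\epsilon>\frac{2\sqrt2\rho_+(1)}{\rho_-(s)}\|\nabla Q(\bar\beta)\|_\infty$. Let $\beta^{(k)}$ be the output and $F^{(k)}$ its support. Let $\gamma=\frac{2\sqrt2\,\epsilon}{\rho_-(s)}$ and $\bar\Delta=|\{j\in\bar F-F^{(k)}:|\bar\beta_j|<\gamma\}|$. Then $$\|\beta^{(k)}-\bar\beta\|^2\le\frac{8\epsilon^2}{\rho_-(s)^2}\bar\Delta,\qquad Q(\beta^{(k)})-Q(\bar\beta)\le\frac{\epsilon^2}{\rho_-(s)}\bar\Delta,$$ $$\frac{\rho_-(s)^2}{8\rho_+(1)^2}|F^{(k)}-\bar F|\le|\bar F-F^{(k)}|\le2\bar\Delta.$$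
   Context: Let $Q:\mathbb{R}^d\to\mathbb{R}$ be convex and continuously differentiable. $e_j$ is the $j$-th standard basis vector, $\mathrm{supp}(\beta)=\{j:\beta_j\ne0\}$, $\|\beta\|_0=|\mathrm{supp}(\beta)|$, $\|\cdot\|$ is the Euclidean norm, $A-B$ is set difference, and $v_S$ is $v$ restricted to the coordinates in $S$. For $F\subseteq\{1,\dots,d\}$, $\hat\beta(F)$ denotes a minimizer of $Q$ over $\{\beta:\mathrm{supp}(\beta)\subseteq F\}$ (assumed to exist). For a positive integer $s$, the restricted strong convexity constants $\rho_-(s),\rho_+(s)>0$ are constants such that for all $\beta,\beta'\in\mathbb{R}^d$ with $\|\beta'-\beta\|_0\le s$: $\frac{\rho_-(s)}{2}\|\beta'-\beta\|^2\le Q(\beta')-Q(\beta)-\langle\nabla Q(\beta),\beta'-\beta\rangle\le\frac{\rho_+(s)}{2}\|\beta'-\beta\|^2.$ $\bar\beta$ is a solution of $\min_\beta Q(\beta)$ subject to $\|\beta\|_0\le\bar k$, $\bar F=\mathrm{supp}(\bar\beta)$ and $\bar k=|\bar F|$. Algorithm FoBa has two variants: FoBa-obj (parameter $\delta>0$) and FoBa-gdt (parameter $\epsilon>0$). Initialize $F^{(0)}=\emptyset$, $\beta^{(0)}=0$, $k=0$, and repeat the following iteration. (1) Stopping test: FoBa-obj stops if $Q(\beta^{(k)})-\min_{\alpha\in\mathbb{R},\,j\notin F^{(k)}}Q(\beta^{(k)}+\alpha e_j)<\delta$; FoBa-gdt stops if $\|\nabla Q(\beta^{(k)})\|_\infty<\epsilon$.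 On stopping the output is $\beta^{(k)}$ with support $F^{(k)}$, and the algorithm is said to terminate at $k$. (2) Forward step: FoBa-obj picks $i^{(k)}\in\arg\min_{i\notin F^{(k)}}\min_\alpha Q(\beta^{(k)}+\alpha e_i)$; FoBa-gdt picks $i^{(k)}\in\arg\max_{i\notin F^{(k)}}|\nabla Q(\beta^{(k)})_i|$. Set $F^{(k+1)}=F^{(k)}\cup\{i^{(k)}\}$, $\beta^{(k+1)}=\hat\beta(F^{(k+1)})$, $\delta^{(k+1)}=Q(\beta^{(k)})-Q(\beta^{(k+1)})$, $k\leftarrow k+1$. (3) Backward step: repeat — if $F^{(k)}=\emptyset$ or $\min_{i\in F^{(k)}}Q(\beta^{(k)}-\beta^{(k)}_ie_i)-Q(\beta^{(k)})\ge\delta^{(k)}/2$, leave the backward step; otherwise pick $j\in\arg\min_{i\in F^{(k)}}Q(\beta^{(k)}-\beta^{(k)}_ie_i)$, set $F^{(k-1)}=F^{(k)}-\{j\}$, $\beta^{(k-1)}=\hat\beta(F^{(k-1)})$, $k\leftarrow k-1$ (where $\delta^{(k-1)}$ is the value recorded at the most recent forward step producing index $k-1$). Thus $|F^{(k)}|=k$ always. ''At the beginning of an iteration'' means the state just before a stopping test. *)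

From Stdlib Require Import Reals.
From mathcomp Require Import all_boot.
Set Implicit Arguments. Unset Strict Implicit. Unset Printing Implicit Defensive.

Open Scope R_scope.

Definition vec (d : nat) := 'I_d -> R.

Definition Reqb (x y : R) : bool := if Req_EM_T x y then true else false.
Definition Rltb (x y : R) : bool := if Rlt_dec x y then true else false.

Definition vadd d (u v : vec d) : vec d := fun i => u i + v i.
Definition vsub d (u v : vec d) : vec d := fun i => u i - v i.
Definition vscale d (a : R) (u : vec d) : vec d := fun i => a * u i.
Definition vzero d : vec d := fun _ => 0.
Definition basis d (j : 'I_d) : vec d := fun i => if i == j then 1 else 0.

Definition inner d (u v : vec d) : R := \big[Rplus/0]_(i < d) (u i * v i).
Definition norm2 d (u : vec d) : R := inner u u.
Definition norm d (u : vec d) : R := sqrt (norm2 u).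
Definition norm_inf d (u : vec d) : R := \big[Rmax/0]_(i < d) Rabs (u i).

Definition supp d (u : vec d) : {set 'I_d} := [set j | ~~ Reqb (u j) 0].
Definition l0 d (u : vec d) : nat := #|supp u|.

Definition convex d (Q : vec d -> R) : Prop :=
  forall (b b' : vec d) (t : R), 0 <= t <= 1 ->
    Q (vadd (vscale t b) (vscale (1 - t) b')) <= t * Q b + (1 - t) * Q b'.

Definition is_gradient d (Q : vec d -> R) (g : vec d -> vec d) : Prop :=
  forall b : vec d, forall e, 0 < e -> exists del, 0 < del /\
    forall h : vec d, norm h < del ->
      Rabs (Q (vadd b h) - Q b - inner (g b) h) <= e * norm h.

Definition continuous_vec d (g : vec d -> vec d) : Prop :=
  forall b : vec d, forall e, 0 < e -> exists del, 0 < del /\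
    forall b' : vec d, norm (vsub b' b) < del -> norm (vsub (g b') (g b)) < e.

Definition C1_with_grad d (Q : vec d -> R) (g : vec d -> vec d) : Prop :=
  is_gradient Q g /\ continuous_vec g.

(* restricted strong convexity / smoothness: rm = rho_-(s), rp = rho_+(s) *)
Definition RSC d (Q : vec d -> R) (g : vec d -> vec d) (s : nat) (rm rp : R) : Prop :=
  forall b b' : vec d, (l0 (vsub b' b) <= s)%N ->
    rm / 2 * norm2 (vsub b' b) <= Q b' - Q b - inner (g b) (vsub b' b) /\
    Q b' - Q b - inner (g b) (vsub b' b) <= rp / 2 * norm2 (vsub b' b).

Definition restricted_min d (Q : vec d -> R) (F : {set 'I_d}) (b : vec d) : Prop :=
  supp b \subset F /\ forall b' : vec d, supp b' \subset F -> Q b <= Q b'.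

Definition drop_coord d (b : vec d) (i : 'I_d) : vec d :=
  vsub b (vscale (b i) (basis i)).

(* Reachable states of FoBa-gdt with parameter eps.
   foba_iter F b dl : state (F^(k), beta^(k), recorded deltas) at the
     beginning of an iteration (just before a stopping test), k = #|F|.
   foba_back F b dl : state inside the backward-step loop.
   dl m is the value delta^(m) recorded at the most recent forward step
   producing index m. *)
Inductive foba_iter d (Q : vec d -> R) (g : vec d -> vec d) (eps : R)
  : {set 'I_d} -> vec d -> (nat -> R) -> Prop :=
| foba_init : foba_iter Q g eps set0 (@vzero d) (fun _ => 0)
| foba_exit_back : forall F b dl,
    foba_back Q g eps F b dl ->
    (F = set0 \/ forall i, i \in F -> Q (drop_coord b i) - Q b >= dl #|F| / 2) ->
    foba_iter Q g eps F b dl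
with foba_back d (Q : vec d -> R) (g : vec d -> vec d) (eps : R)
  : {set 'I_d} -> vec d -> (nat -> R) -> Prop :=
| foba_forward : forall F b dl i b',
    foba_iter Q g eps F b dl ->
    ~ (norm_inf (g b) < eps) ->
    i \notin F ->
    (forall i', i' \notin F -> Rabs (g b i') <= Rabs (g b i)) ->
    restricted_min Q (i |: F) b' ->
    foba_back Q g eps (i |: F) b'
      (fun m => if m == #|F|.+1 then Q b - Q b' else dl m)
| foba_backward : forall F b dl j b',
    foba_back Q g eps F b dl ->
    j \in F ->
    Q (drop_coord b j) - Q b < dl #|F| / 2 ->
    (forall i, i \in F -> Q (drop_coord b j) <= Q (drop_coord b i)) ->
    restricted_min Q (F :\ j) b' ->
    foba_back Q g eps (F :\ j) b' dl.

Definition foba_gdt_output d (Q : vec d -> R) (g : vec d -> vec d) (eps : R)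
  (F : {set 'I_d}) (b : vec d) : Prop :=
  exists dl, foba_iter Q g eps F b dl /\ norm_inf (g b) < eps.

From Pilot Require Import Defs.
From Stdlib Require Import Reals Lra Psatz FunctionalExtensionality.
From HB Require Import structures.
From mathcomp Require Import all_boot zify.

(* Everything is coordinatewise calculus on top of restricted strong convexity.
   Along one coordinate, RSC(1) gives the descent inequality
   Q(b + t e_j) <= Q b + t g_j + rho_+(1) t^2 / 2; hence a restricted minimizer
   has zero gradient on its support, deleting coordinate j costs at most
   rho_+(1) b_j^2 / 2, and a forward step gains at least g_i^2 / (2 rho_+(1)).

   Comparison lemma: let b be a restricted minimizer on F with |g(b)| <= G and
   eps-large coordinates, and c = bbar (zero gradient on its support).  Adding the
   RSC(s) lower bounds at b and at c gives a sum of coordinate terms; a case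
   analysis on F and supp c bounds ||b - c||^2, Q b - Q c and |supp c - F| by
   the number of missed coordinates of c below gamma_G = 2 sqrt 2 G / rho_-(s).

   With G = eps at the output this yields the four claims.  At a forward step
   (G = |g_i| >= eps) it bounds the new support, so that after the step plus
   backward loop |F| + |supp bbar| < s still holds: this invariant, proved by
   mutual induction over the reachable states of the algorithm, keeps RSC(s)
   applicable throughout. *)

Set Implicit Arguments. Unset Strict Implicit.
Open Scope R_scope.

(* Real addition as a commutative monoid, so that the generic big-operator
   lemmas apply to the finite sums over 'I_d used in Defs. *)
HB.instance Definition _ := Monoid.isComLaw.Build R 0 Rplus
  (fun a b c => esym (Rplus_assoc a b c)) Rplus_comm Rplus_0_l.

Notation rsum d f := (\big[Rplus/0]_(i < d) f i).

Lemma rsum_le d (f h : 'I_d -> R) : (forall i, f i <= h i) -> rsum d f <= rsum d h.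
Proof. by move=> fh; apply: (big_ind2 Rle) => // *; lra. Qed.

Lemma rsumD d (f h : 'I_d -> R) : rsum d (fun i => f i + h i) = rsum d f + rsum d h.
Proof. exact: big_split. Qed.

Lemma rsumZ d c (f : 'I_d -> R) : rsum d (fun i => c * f i) = c * rsum d f.
Proof. by apply: (big_ind2 (fun x y => x = c * y)) => [|????->->|]; rewrite //; ring. Qed.

Lemma rsum_indicator d (A : {set 'I_d}) c :
  rsum d (fun i => if i \in A then c else 0) = c * INR #|A|.
Proof.
rewrite -big_mkcond big_const; elim: #|A| => [|n IH]; first by rewrite /=; ring.
by rewrite [iter _ _ _]/= IH S_INR; ring.
Qed.

Lemma rsum_single d (j : 'I_d) c : rsum d (fun i => if i == j then c else 0) = c.
Proof.
have := rsum_indicator [set j] c; rewrite cards1 /= Rmult_1_r => {2}<-.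
by apply: eq_bigr => i _; rewrite inE.
Qed.

Lemma norm_inf_ge d (v : vec d) j : Rabs (v j) <= norm_inf v.
Proof.
rewrite /norm_inf; elim: (index_enum _) (mem_index_enum j) => [|a r IH] //.
rewrite in_cons big_cons => /orP [/eqP <-|/IH jr]; first exact: Rmax_l.
exact: Rle_trans jr (Rmax_r _ _).
Qed.

Lemma norm_inf_le d (v : vec d) M :
  0 <= M -> (forall j, Rabs (v j) <= M) -> norm_inf v <= M.
Proof. by move=> M0 vM; apply: (big_ind (fun x => x <= M)) => // x y; apply: Rmax_lub. Qed.

Lemma norm_inf_ge0 d (v : vec d) : 0 <= norm_inf v.
Proof.
apply: (big_ind (fun x => 0 <= x)) => [|x y x0 _|i _]; first lra.
  exact: Rle_trans x0 (Rmax_l _ _).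
exact: Rabs_pos.
Qed.

Lemma supp_zero d (u : vec d) (A : {set 'I_d}) j : supp u \subset A -> j \notin A -> u j = 0.
Proof.
move=> /subsetP uA jA; have : j \notin supp u by apply: contra jA; apply: uA.
by rewrite inE negbK /Reqb; case: Req_EM_T.
Qed.

Lemma notin_supp d (u : vec d) j : j \notin supp u -> u j = 0.
Proof. exact: supp_zero. Qed.

Lemma supp_sub d (u : vec d) (A : {set 'I_d}) :
  (forall j, j \notin A -> u j = 0) -> supp u \subset A.
Proof.
move=> u0; apply/subsetP => j; rewrite inE; apply: contraR => /u0 ->.
by rewrite /Reqb; case: Req_EM_T.
Qed.

Lemma Rltb_true x y : Rltb x y = true <-> x < y.
Proof. by rewrite /Rltb; case: Rlt_dec. Qed.

Lemma l0_vsub d (b c : vec d) (A B : {set 'I_d}) :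
  supp b \subset A -> supp c \subset B -> (l0 (vsub b c) <= #|A| + #|B|)%N.
Proof.
move=> bA cB; have : supp (vsub b c) \subset A :|: B.
  apply: supp_sub => i; rewrite inE negb_or => /andP [iA iB].
  by rewrite /vsub (supp_zero bA iA) (supp_zero cB iB); ring.
move/subset_leq_card; have := cardsUI A B; rewrite /l0; lia.
Qed.

Lemma coord_sq_le_norm2 d (u : vec d) j : u j * u j <= norm2 u.
Proof.
rewrite /norm2 /inner -(rsum_single j (u j * u j)); apply: rsum_le => k.
by case: eqP => [->|_]; [lra | exact: Rle_0_sqr].
Qed.

Lemma norm2_ge0 d (u : vec d) : 0 <= norm2 u.
Proof. by apply: (big_ind (fun x => 0 <= x)) => [|x y|j _]; [lra | lra | exact: Rle_0_sqr]. Qed.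

Lemma card_le_outside d (A B : {set 'I_d}) : (#|A| <= #|A :\: B| + #|B|)%N.
Proof. by have := cardsID B A; have := subset_leq_card (subsetIr A B); lia. Qed.

Lemma norm2_vsubC d (b c : vec d) : norm2 (vsub c b) = norm2 (vsub b c).
Proof. by apply: eq_bigr => i _; rewrite /vsub; ring. Qed.

Lemma norm2_vsub_le d (a b c : vec d) :
  norm2 (vsub a c) <= 2 * norm2 (vsub a b) + 2 * norm2 (vsub b c).
Proof.
rewrite -!rsumZ -rsumD; apply: rsum_le => j; rewrite /vsub.
have := Rle_0_sqr (a j - 2 * b j + c j); rewrite /Rsqr; nra.
Qed.

Lemma count_by_norm d (b c : vec d) (F : {set 'I_d}) a k :
  0 <= k -> (forall j, j \in F -> a <= k * (b j * b j)) ->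
  a * INR #|F :\: supp c| <= k * norm2 (vsub b c).
Proof.
move=> k_ge0 b_large; rewrite -rsum_indicator -rsumZ; apply: rsum_le => j.
rewrite in_setD /vsub; have := Rle_0_sqr (b j - c j); rewrite /Rsqr => sq_ge0.
have [jc|jc] := boolP (j \in supp c); have [jF|jF] := boolP (j \in F) => /=; try nra.
by rewrite (notin_supp jc) Rminus_0_r; exact: b_large.
Qed.

Definition bump d (b : vec d) (j : 'I_d) (t : R) : vec d := vadd b (vscale t (basis j)).

Lemma vsub_bump d (b : vec d) j t : vsub (bump b j t) b = vscale t (basis j).
Proof. by apply: functional_extensionality => i; rewrite /vsub /bump /vadd; ring. Qed.

Lemma inner_basis d (v : vec d) j t : inner v (vscale t (basis j)) = t * v j.
Proof.
rewrite /inner -(rsum_single j (t * v j)); apply: eq_bigr => i _.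
by rewrite /vscale /basis; case: eqP => [->|_]; ring.
Qed.

Lemma norm2_basis d j t : norm2 (vscale t (basis j) : vec d) = t * t.
Proof.
rewrite /norm2 /inner -(rsum_single j (t * t)); apply: eq_bigr => i _.
by rewrite /vscale /basis; case: eqP => _; ring.
Qed.

Lemma l0_basis d j t : (l0 (vscale t (basis j) : vec d) <= 1)%N.
Proof.
rewrite -(cards1 j); apply: subset_leq_card; apply: supp_sub => i.
by rewrite inE /vscale /basis => /negbTE ->; ring.
Qed.

Lemma supp_bump d (b : vec d) (A : {set 'I_d}) j t :
  supp b \subset A -> j \in A -> supp (bump b j t) \subset A.
Proof.
move=> bA jA; apply: supp_sub => i iA; rewrite /bump /vadd /vscale /basis (supp_zero bA iA).
by case: eqP => [ij|_]; [move: iA; rewrite ij jA | ring].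
Qed.

Lemma drop_coord_bump d (b : vec d) j : drop_coord b j = bump b j (- b j).
Proof. by apply: functional_extensionality => i; rewrite /drop_coord /bump /vsub /vadd /vscale; ring. Qed.

Section CoordinateMoves.
Variables (d : nat) (Q : vec d -> R) (g : vec d -> vec d) (rm1 rp1 : R).
Implicit Types (b bbar : vec d) (F : {set 'I_d}) (i j : 'I_d).
Hypothesis rsc1 : RSC Q g 1 rm1 rp1.
Hypothesis rp1_pos : 0 < rp1.

Lemma coord_descent b j t : Q (bump b j t) <= Q b + t * g b j + rp1 / 2 * (t * t).
Proof.
have [_] := @rsc1 b (bump b j t) ltac:(rewrite vsub_bump; exact: l0_basis).
by rewrite vsub_bump inner_basis norm2_basis; lra.
Qed.

Lemma coord_gradient_step b j :
  Q (bump b j (- g b j / rp1)) <= Q b - g b j * g b j / (2 * rp1).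
Proof.
have -> : Q b - g b j * g b j / (2 * rp1) =
  Q b + - g b j / rp1 * g b j + rp1 / 2 * (- g b j / rp1 * (- g b j / rp1)).
  by field; lra.
exact: coord_descent.
Qed.

Lemma coord_min_grad b j : (forall t, Q b <= Q (bump b j t)) -> g b j = 0.
Proof.
move=> bmin; have := bmin (- g b j / rp1); have := coord_gradient_step b j.
have : 0 < / (2 * rp1) by apply: Rinv_0_lt_compat; lra.
rewrite /Rdiv => inv_pos step_le min_le.
have : g b j * g b j <= 0 by nra.
nra.
Qed.

Lemma restricted_min_grad F b j : restricted_min Q F b -> j \in F -> g b j = 0.
Proof.
by move=> [bF bmin] jF; apply: coord_min_grad => t; apply: bmin; apply: supp_bump.
Qed.

Lemma drop_cost_le F b j :
  restricted_min Q F b -> j \in F -> Q (drop_coord b j) - Q b <= rp1 / 2 * (b j * b j).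
Proof.
move=> bmin jF; have := coord_descent b j (- b j).
by rewrite -drop_coord_bump (restricted_min_grad bmin jF); lra.
Qed.

Lemma forward_gain F b (b' : vec d) i :
  supp b \subset F -> restricted_min Q (i |: F) b' ->
  Q b' <= Q b - g b i * g b i / (2 * rp1).
Proof.
move=> bF [_ b'min]; apply: Rle_trans (coord_gradient_step b i); apply: b'min.
by apply: supp_bump; [exact: subset_trans bF (subsetUr _ _) | rewrite setU11].
Qed.

Lemma undeletable_large F b j delta a :
  restricted_min Q F b -> j \in F -> delta / 2 <= Q (drop_coord b j) - Q b ->
  a / (2 * rp1) <= delta -> a <= 2 * (rp1 * rp1) * (b j * b j).
Proof.
move=> bmin jF cost_ge delta_ge; have := drop_cost_le bmin jF.
have -> : a = 2 * rp1 * (a / (2 * rp1)) by field; lra.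
nra.
Qed.

(* The sparse target has vanishing gradient on its support: moving along such
   a coordinate does not increase the sparsity. *)
Lemma sparse_opt_grad bbar j :
  (forall b : vec d, (l0 b <= l0 bbar)%N -> Q bbar <= Q b) ->
  j \in supp bbar -> g bbar j = 0.
Proof.
move=> bbar_opt jF; apply: coord_min_grad => t; apply: bbar_opt.
exact/subset_leq_card/supp_bump.
Qed.

End CoordinateMoves.

Lemma rsc_const_order d (Q : vec d -> R) g s rm rp rm1 rp1 (j : 'I_d) :
  RSC Q g 1 rm1 rp1 -> RSC Q g s rm rp -> (0 < s)%N -> rm <= rp /\ rm <= rp1.
Proof.
move=> rsc1 rsc_s s_pos; set e := bump (@vzero d) j 1.
have e1 : (l0 (vsub e (@vzero d)) <= 1)%N by rewrite vsub_bump; exact: l0_basis.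
have [lo up] := rsc_s (@vzero d) e (leq_trans e1 s_pos); have [_ up1] := rsc1 (@vzero d) e e1.
by move: lo up up1; rewrite vsub_bump norm2_basis; lra.
Qed.

Lemma abs_sq x : Rabs x * Rabs x = x * x.
Proof. by rewrite -Rabs_mult Rabs_pos_eq //; apply: Rle_0_sqr. Qed.

Lemma div_le_of_le_mul a b c : 0 < c -> a <= c * b -> a / c <= b.
Proof.
move=> c_pos le; apply: (Rmult_le_reg_l c) => //.
by rewrite /Rdiv -Rmult_assoc (Rmult_comm c a) Rmult_assoc Rinv_r; lra.
Qed.

Lemma sqrt2_facts : sqrt 2 * sqrt 2 = 2 /\ 1 <= sqrt 2.
Proof.
split; first by rewrite sqrt_sqrt; lra.
by rewrite -sqrt_1; apply: sqrt_le_1_alt; lra.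
Qed.

Lemma quad_lower rm G a y :
  0 < rm -> Rabs a <= G -> - (G * G / (2 * rm)) <= rm / 2 * (y * y) + a * y.
Proof.
move=> rm_pos aG; have := Rle_abs (- (a * y)); rewrite Rabs_Ropp Rabs_mult -(abs_sq y).
set u := Rabs y; have u_ge0 : 0 <= u := Rabs_pos y.
have square : rm / 2 * (u * u) - G * u + G * G / (2 * rm) = (rm * u - G) * (rm * u - G) / (2 * rm).
  by field; lra.
have : 0 <= (rm * u - G) * (rm * u - G) / (2 * rm).
  by apply: Rmult_le_pos; [apply: Rle_0_sqr | apply/Rlt_le/Rinv_0_lt_compat; lra].
have : Rabs a * u <= G * u by apply: Rmult_le_compat_r.
lra.
Qed.

Lemma quad_nonneg rm G a y :
  0 < rm -> Rabs a <= G -> 2 * G <= rm * Rabs y -> 0 <= rm / 2 * (y * y) + a * y.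
Proof.
move=> rm_pos aG yG; have := Rle_abs (- (a * y)); rewrite Rabs_Ropp Rabs_mult -(abs_sq y).
have := Rabs_pos y; nra.
Qed.

Lemma quad_large rm G a y :
  0 < rm -> Rabs a <= G -> 2 * G <= rm * Rabs y -> G * G / rm <= rm * (y * y) + a * y.
Proof.
move=> rm_pos aG yG; have := Rle_abs (- (a * y)); rewrite Rabs_Ropp Rabs_mult -(abs_sq y).
have G_ge0 : 0 <= G by apply: Rle_trans (Rabs_pos a) aG.
have := Rabs_pos y => y_ge0 ay.
have : G * G <= rm * (rm * (Rabs y * Rabs y) - G * Rabs y) by nra.
move=> /(div_le_of_le_mul rm_pos); nra.
Qed.

Lemma above_threshold rm G y :
  0 < rm -> 0 <= G -> ~ Rabs y < 2 * sqrt 2 * G / rm -> 2 * G <= rm * Rabs y.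
Proof.
move=> rm_pos G_ge0 /Rnot_lt_le yG; have [_ sqrt2_ge1] := sqrt2_facts.
have := Rmult_le_compat_l _ _ _ (Rlt_le _ _ rm_pos) yG.
have -> : rm * (2 * sqrt 2 * G / rm) = 2 * sqrt 2 * G by field; lra.
nra.
Qed.

Lemma gap_eps_pos rm rp1 eps N :
  0 < rm -> 0 < rp1 -> 0 <= N -> 2 * sqrt 2 * rp1 * N < eps * rm -> 0 < eps.
Proof.
move=> rm_pos rp1_pos N_ge0 eps_gap; have [_ sqrt2_ge1] := sqrt2_facts.
have : 0 <= 2 * sqrt 2 * rp1 * N by apply: Rmult_le_pos => //; nra.
nra.
Qed.

Lemma large_coord_threshold rm rp1 eps N x :
  0 < rm -> 0 < rp1 -> 0 <= N -> 2 * sqrt 2 * rp1 * N < eps * rm ->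
  eps * eps <= 2 * (rp1 * rp1) * (x * x) -> 2 * N <= rm * Rabs x.
Proof.
move=> rm_pos rp1_pos N_ge0 eps_gap x_large; have [sqrt2_sq sqrt2_ge1] := sqrt2_facts.
have u_ge0 : 0 <= sqrt 2 * rp1 * Rabs x.
  by apply: Rmult_le_pos; [apply: Rmult_le_pos; lra | exact: Rabs_pos].
have eps_le : eps <= sqrt 2 * rp1 * Rabs x.
  apply: Rnot_lt_le => lt; have : (sqrt 2 * rp1 * Rabs x) * (sqrt 2 * rp1 * Rabs x) < eps * eps.
    by apply: Rmult_le_0_lt_compat.
  have -> : (sqrt 2 * rp1 * Rabs x) * (sqrt 2 * rp1 * Rabs x) =
    sqrt 2 * sqrt 2 * (rp1 * rp1) * (Rabs x * Rabs x) by ring.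
  rewrite sqrt2_sq abs_sq; lra.
have : sqrt 2 * rp1 * (2 * N) < sqrt 2 * rp1 * (rm * Rabs x) by nra.
move=> scaled_lt; apply/Rlt_le/(Rmult_lt_reg_l (sqrt 2 * rp1)) => //; nra.
Qed.

Lemma move_bound rm n a x :
  0 < rm -> 0 <= n -> rm / 2 * n <= - (a * x) -> x * x <= n -> rm * rm * n <= 4 * (a * a).
Proof.
move=> rm_pos n_ge0 lin sq; have := Rle_0_sqr a; rewrite /Rsqr => aa_ge0.
have [n_pos|<-] := Rle_lt_or_eq_dec _ _ n_ge0; last lra.
have : (rm / 2 * n) * (rm / 2 * n) <= (a * a) * n.
  apply: Rle_trans (_ : (a * x) * (a * x) <= _); last nra.
  have half_ge0 : 0 <= rm / 2 * n by apply: Rmult_le_pos; lra.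
  have -> : a * x * (a * x) = - (a * x) * - (a * x) by ring.
  by apply: Rmult_le_compat; lra.
nra.
Qed.

Section Comparison.
Variables (d : nat) (Q : vec d -> R) (g : vec d -> vec d) (s : nat) (rm rp : R).
Hypothesis rsc_s : RSC Q g s rm rp.
Hypothesis rm_pos : 0 < rm.
Implicit Types (b c : vec d) (i : 'I_d).

(* Coordinate summand of the sum of the RSC(s) lower bounds at c and at b. *)
Definition sym_term b c i : R :=
  rm * ((b i - c i) * (b i - c i)) + g c i * (b i - c i) + g b i * (c i - b i).

(* Coordinate summand of the RSC(s) upper estimate of Q b - Q c. *)
Definition gap_term b c i : R :=
  g b i * (b i - c i) - rm / 2 * ((b i - c i) * (b i - c i)).

Lemma sym_rsc b c :
  (l0 (vsub b c) <= s)%N -> (l0 (vsub c b) <= s)%N -> rsum d (sym_term b c) <= 0.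
Proof.
move=> sbc scb; have [lo_c _] := @rsc_s c b sbc; have [lo_b _] := @rsc_s b c scb.
have -> : rsum d (sym_term b c) =
    rm * norm2 (vsub b c) + inner (g c) (vsub b c) + inner (g b) (vsub c b).
  by rewrite !rsumD rsumZ.
rewrite norm2_vsubC in lo_b; lra.
Qed.

Lemma gap_rsc b c : (l0 (vsub c b) <= s)%N -> Q b - Q c <= rsum d (gap_term b c).
Proof.
move=> scb; have [lo_b _] := @rsc_s b c scb.
have -> : rsum d (gap_term b c) = (-1) * inner (g b) (vsub c b) + - (rm / 2) * norm2 (vsub b c).
  by rewrite -!rsumZ -rsumD; apply: eq_bigr => i _; rewrite /gap_term /vsub; ring.
rewrite norm2_vsubC in lo_b; lra.
Qed.

Variables (F : {set 'I_d}) (b c : vec d) (G eps rp1 : R).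
Hypothesis b_supp : supp b \subset F.
Hypothesis gb_F : forall i, i \in F -> g b i = 0.
Hypothesis gc_supp : forall i, i \in supp c -> g c i = 0.
Hypothesis gb_le : forall i, Rabs (g b i) <= G.
Hypothesis b_large : forall i, i \in F -> eps * eps <= 2 * (rp1 * rp1) * (b i * b i).
Hypothesis rp1_pos : 0 < rp1.
Hypothesis eps_gap : 2 * sqrt 2 * rp1 * norm_inf (g c) < eps * rm.

Definition small_missed : {set 'I_d} :=
  [set j in supp c :\: F | Rltb (Rabs (c j)) (2 * sqrt 2 * G / rm)].

Lemma in_small_missed i :
  (i \in small_missed) = [&& i \notin F, i \in supp c & Rltb (Rabs (c i)) (2 * sqrt 2 * G / rm)].
Proof. by rewrite inE in_setD andbA. Qed.

Lemma extra_coord i : i \in F -> 0 <= rm / 2 * (b i * b i) + g c i * b i.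
Proof.
move=> iF; have N_ge0 := norm_inf_ge0 (g c).
apply: (quad_nonneg rm_pos (norm_inf_ge _ i)).
exact: large_coord_threshold rm_pos rp1_pos N_ge0 eps_gap (b_large iF).
Qed.

Lemma missed_coord i :
  - (G * G / (2 * rm)) <= rm / 2 * (c i * c i) + g b i * c i /\
  (i \notin small_missed -> i \in supp c -> i \notin F ->
     0 <= rm / 2 * (c i * c i) + g b i * c i /\ G * G / rm <= rm * (c i * c i) + g b i * c i).
Proof.
split; first exact: quad_lower rm_pos (gb_le i).
rewrite in_small_missed => not_small ic iF; move: not_small; rewrite iF ic /=.
move=> /negP not_lt; have G_ge0 := Rle_trans _ _ _ (Rabs_pos _) (gb_le i).
have large := above_threshold rm_pos G_ge0 (fun lt => not_lt (proj2 (Rltb_true _ _) lt)).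
by split; [exact: quad_nonneg rm_pos (gb_le i) large | exact: quad_large rm_pos (gb_le i) large].
Qed.

Lemma coord_dist i :
  rm / 2 * ((b i - c i) * (b i - c i)) <=
  sym_term b c i + (if i \in small_missed then G * G / (2 * rm) else 0).
Proof.
have [lower upper] := missed_coord i; rewrite /sym_term in_small_missed.
have [iF|iF] := boolP (i \in F); have [ic|ic] := boolP (i \in supp c) => /=.
- by rewrite gb_F // gc_supp //; have := Rle_0_sqr (b i - c i); rewrite /Rsqr; nra.
- by rewrite gb_F // (notin_supp ic); have := extra_coord iF; lra.
- rewrite (supp_zero b_supp iF) gc_supp //; case small: (Rltb _ _); first lra.
  by have [] := upper ltac:(by rewrite in_small_missed iF ic small) ic iF; lra.
- by rewrite (supp_zero b_supp iF) (notin_supp ic); lra.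
Qed.

Lemma coord_missed i :
  (if i \in supp c :\: F then G * G / rm else 0) <=
  sym_term b c i + (if i \in small_missed then 3 * (G * G / (2 * rm)) else 0).
Proof.
have [lower upper] := missed_coord i; rewrite /sym_term in_small_missed in_setD.
have GG : 0 <= G * G / (2 * rm).
  by apply: Rmult_le_pos; [exact: Rle_0_sqr | apply/Rlt_le/Rinv_0_lt_compat; lra].
have [iF|iF] := boolP (i \in F); have [ic|ic] := boolP (i \in supp c) => /=.
- by rewrite gb_F // gc_supp //; have := Rle_0_sqr (b i - c i); rewrite /Rsqr; nra.
- by rewrite gb_F // (notin_supp ic); have := extra_coord iF; have := Rle_0_sqr (b i); rewrite /Rsqr; nra.
- rewrite (supp_zero b_supp iF) gc_supp //.
  have half : G * G / rm = 2 * (G * G / (2 * rm)) by field; lra.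
  case small: (Rltb _ _); first by have := Rle_0_sqr (c i); rewrite /Rsqr; nra.
  by have [] := upper ltac:(by rewrite in_small_missed iF ic small) ic iF; lra.
- by rewrite (supp_zero b_supp iF) (notin_supp ic); lra.
Qed.

Lemma coord_gap i : gap_term b c i <= (if i \in small_missed then G * G / (2 * rm) else 0).
Proof.
have [lower upper] := missed_coord i; rewrite /gap_term in_small_missed.
have [iF|iF] := boolP (i \in F); have [ic|ic] := boolP (i \in supp c) => /=.
- by rewrite gb_F //; have := Rle_0_sqr (b i - c i); rewrite /Rsqr; nra.
- by rewrite gb_F //; have := Rle_0_sqr (b i - c i); rewrite /Rsqr; nra.
- rewrite (supp_zero b_supp iF); case small: (Rltb _ _); first lra.
  by have [] := upper ltac:(by rewrite in_small_missed iF ic small) ic iF; lra.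
- by rewrite (supp_zero b_supp iF) (notin_supp ic); lra.
Qed.

Hypothesis card_le : (#|F| + l0 c <= s)%N.

Lemma pair_sparse : (l0 (vsub b c) <= s)%N /\ (l0 (vsub c b) <= s)%N.
Proof.
have := l0_vsub b_supp (subxx (supp c)); have := l0_vsub (subxx (supp c)) b_supp.
by move: card_le; rewrite /l0; lia.
Qed.

Lemma dist_bound : rm * rm * norm2 (vsub b c) <= G * G * INR #|small_missed|.
Proof.
have [sbc scb] := pair_sparse; have := sym_rsc sbc scb.
have := rsum_le coord_dist; rewrite rsumD rsumZ rsum_indicator => sum_le sym_le.
rewrite /norm2 /inner /vsub; set N2 := \big[Rplus/0]_(i < d) _ in sum_le *.
have half_le : rm / 2 * N2 <= G * G / (2 * rm) * INR #|small_missed| by lra.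
have := Rmult_le_compat_l (2 * rm) _ _ ltac:(lra) half_le.
have -> : 2 * rm * (rm / 2 * N2) = rm * rm * N2 by field.
by have -> : 2 * rm * (G * G / (2 * rm) * INR #|small_missed|) = G * G * INR #|small_missed|
  by field; lra.
Qed.

Lemma gap_bound : 2 * rm * (Q b - Q c) <= G * G * INR #|small_missed|.
Proof.
have [_ scb] := pair_sparse; have := gap_rsc scb.
have := rsum_le coord_gap; rewrite rsum_indicator => sum_le gap_le.
have -> : G * G * INR #|small_missed| = 2 * rm * (G * G / (2 * rm) * INR #|small_missed|).
  by field; lra.
by apply: Rmult_le_compat_l; lra.
Qed.

Lemma missed_bound : 0 < G -> 2 * INR #|supp c :\: F| <= 3 * INR #|small_missed|.
Proof.
move=> G_pos; have [sbc scb] := pair_sparse; have := sym_rsc sbc scb.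
have := rsum_le coord_missed; rewrite rsumD !rsum_indicator => sum_le sym_le.
have GG : 0 < G * G / (2 * rm) by apply: Rdiv_lt_0_compat; nra.
apply: (Rmult_le_reg_l (G * G / (2 * rm))) => //.
have -> : G * G / (2 * rm) * (2 * INR #|supp c :\: F|) = G * G / rm * INR #|supp c :\: F|.
  by field; lra.
lra.
Qed.

End Comparison.

(* Final arithmetic of the sparsity invariant: the growth bound after a forward
   step keeps |F| + |supp bbar| below s under the assumption on s. *)
Lemma sparsity_arith s K x Y rm rp rp1 :
  0 < rm -> rm <= rp -> rm <= rp1 -> 0 <= K ->
  rm * rm * Y <= 4 * (rp1 * rp1) * (K + 4) -> x <= Y + K ->
  s - K > (K + 1) * ((sqrt (rp / rm) + 1) * (2 * rp1 / rm)) ^ 2 -> x + K < s.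
Proof.
move=> rm_pos rm_rp rm_rp1 K_ge0 Y_le x_le s_gt; set q := rp1 / rm.
have q_ge1 : 1 <= q by apply: (Rmult_le_reg_r rm) => //; rewrite /q; field_simplify; lra.
have rt_ge1 : 1 <= sqrt (rp / rm).
  rewrite -sqrt_1; apply: sqrt_le_1_alt; apply: (Rmult_le_reg_r rm) => //; field_simplify; lra.
have Y_le' : Y <= 4 * (q * q) * (K + 4).
  apply: (Rmult_le_reg_l (rm * rm)); first nra.
  by have -> : rm * rm * (4 * (q * q) * (K + 4)) = 4 * (rp1 * rp1) * (K + 4) by rewrite /q; field; lra.
have E : ((sqrt (rp / rm) + 1) * (2 * rp1 / rm)) ^ 2 =
  (sqrt (rp / rm) + 1) * (sqrt (rp / rm) + 1) * 4 * (q * q) by rewrite /q; field; lra.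
rewrite E in s_gt.
set W := (sqrt (rp / rm) + 1) * (sqrt (rp / rm) + 1) * 4 * (q * q) in s_gt.
have qq_ge1 : 1 <= q * q by nra.
have W_ge : 16 * (q * q) <= W.
  have : 4 <= (sqrt (rp / rm) + 1) * (sqrt (rp / rm) + 1) by nra.
  by rewrite /W; nra.
have : (K + 1) * (16 * (q * q)) <= (K + 1) * W by apply: Rmult_le_compat_l; lra.
have : K <= K * (q * q) by nra.
lra.
Qed.

Section ForwardStep.
Variables (d : nat) (Q : vec d -> R) (g : vec d -> vec d) (s : nat) (rm rp rm1 rp1 eps : R).
Variables (bbar b b' : vec d) (F : {set 'I_d}) (i : 'I_d).
Hypothesis rsc1 : RSC Q g 1 rm1 rp1.
Hypothesis rsc_s : RSC Q g s rm rp.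
Hypothesis rm_pos : 0 < rm.
Hypothesis rp1_pos : 0 < rp1.
Hypothesis b_min : restricted_min Q F b.
Hypothesis b'_min : restricted_min Q (i |: F) b'.
Hypothesis i_new : i \notin F.
Hypothesis i_max : forall j, j \notin F -> Rabs (g b j) <= Rabs (g b i).
Hypothesis card_lt : (#|F| + l0 bbar < s)%N.

Lemma forward_grad_max j : Rabs (g b j) <= Rabs (g b i).
Proof.
have [jF|jF] := boolP (j \in F); last exact: i_max.
by rewrite (restricted_min_grad rsc1 rp1_pos b_min jF) Rabs_R0; exact: Rabs_pos.
Qed.

Lemma forward_sparse : (l0 (vsub b' b) <= s)%N.
Proof.
have : supp (vsub b' b) \subset i |: F.
  apply: supp_sub => j jF; rewrite /vsub (supp_zero b'_min.1 jF) (supp_zero b_min.1); first ring.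
  by apply: contra jF => jF; rewrite setU1r.
move/subset_leq_card; rewrite cardsU1 i_new; move: card_lt; rewrite /l0; lia.
Qed.

Lemma forward_move : rm * rm * norm2 (vsub b' b) <= 4 * (g b i * g b i).
Proof.
have [lo _] := @rsc_s b b' forward_sparse.
have b'_le : Q b' <= Q b by apply: b'_min.2; exact: subset_trans b_min.1 (subsetUr _ _).
have inner_eq : inner (g b) (vsub b' b) = g b i * b' i.
  rewrite /inner -(rsum_single i (g b i * b' i)); apply: eq_bigr => j _; rewrite /vsub.
  case: eqP => [->|/eqP ji]; first by rewrite (supp_zero b_min.1 i_new); ring.
  have [jF|jF] := boolP (j \in F); first by rewrite (restricted_min_grad rsc1 rp1_pos b_min jF); ring.
  by rewrite (supp_zero b'_min.1) ?(supp_zero b_min.1 jF) ?inE ?negb_or ?ji; first ring.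
have coord := coord_sq_le_norm2 (vsub b' b) i.
rewrite /vsub (supp_zero b_min.1 i_new) Rminus_0_r in coord.
apply: (move_bound (x := b' i)) => //; [exact: norm2_ge0 | lra].
Qed.

Hypothesis gbar_supp : forall j, j \in supp bbar -> g bbar j = 0.
Hypothesis eps_gap : 2 * sqrt 2 * rp1 * norm_inf (g bbar) < eps * rm.
Hypothesis b_large : forall j, j \in F -> eps * eps <= 2 * (rp1 * rp1) * (b j * b j).
Hypothesis not_stop : ~ norm_inf (g b) < eps.
Hypothesis no_backward :
  forall j, j \in i |: F -> Q (drop_coord b' j) - Q b' >= (Q b - Q b') / 2.

Lemma forward_growth :
  rm * rm * INR #|(i |: F) :\: supp bbar| <= 4 * (rp1 * rp1) * (INR (l0 bbar) + 4).
Proof.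
set G := Rabs (g b i); set Y := INR #|(i |: F) :\: supp bbar|; set K := INR (l0 bbar).
have G_pos : 0 < G.
  have := gap_eps_pos rm_pos rp1_pos (norm_inf_ge0 _) eps_gap.
  have := norm_inf_le (Rabs_pos _) forward_grad_max; move/Rnot_lt_le: not_stop; rewrite -/G.
  lra.
have GG : g b i * g b i = G * G by rewrite abs_sq.
have gain := forward_gain rsc1 rp1_pos (i := i) b_min.1 b'_min; rewrite GG in gain.
have b'_large : forall j, j \in i |: F -> G * G <= 2 * (rp1 * rp1) * (b' j * b' j).
  move=> j jF; apply: (undeletable_large rsc1 rp1_pos b'_min jF (Rge_le _ _ (no_backward jF))).
  lra.
have count := count_by_norm bbar (k := 2 * (rp1 * rp1)) ltac:(nra) b'_large.
rewrite -/Y in count.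
have far := dist_bound rsc_s rm_pos b_min.1 (fun j => restricted_min_grad rsc1 rp1_pos b_min (j := j))
  gbar_supp forward_grad_max b_large rp1_pos eps_gap (ltnW card_lt); rewrite -/G in far.
have small_le : INR #|small_missed rm F bbar G| <= K.
  by apply/le_INR/leP/subset_leq_card/subsetP => j; rewrite in_small_missed => /and3P [].
have move := forward_move; rewrite GG in move.
have tri := norm2_vsub_le b' b bbar.
set nb' := norm2 (vsub b' bbar) in count tri; set n1 := norm2 (vsub b' b) in move tri.
set n2 := norm2 (vsub b bbar) in far tri.
have far' : rm * rm * n2 <= G * G * K by apply: Rle_trans far _; apply: Rmult_le_compat_l; nra.
have total : rm * rm * nb' <= 2 * (G * G) * (K + 4).
  by apply: Rle_trans (Rmult_le_compat_l _ _ _ _ tri) _; nra.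
apply: (Rmult_le_reg_l (G * G)); first nra.
have := Rmult_le_compat_l (rm * rm) _ _ ltac:(nra) count.
have := Rmult_le_compat_l (2 * (rp1 * rp1)) _ _ ltac:(nra) total.
nra.
Qed.

Hypothesis s_pos : (0 < s)%N.
Hypothesis s_large : INR s - INR (l0 bbar) >
  (INR (l0 bbar) + 1) * ((sqrt (rp / rm) + 1) * (2 * rp1 / rm)) ^ 2.

Lemma forward_keeps_sparse : (#|i |: F| + l0 bbar < s)%N.
Proof.
have [rm_rp rm_rp1] := rsc_const_order i rsc1 rsc_s s_pos.
have split_le := card_le_outside (i |: F) (supp bbar).
apply/ltP/INR_lt; rewrite plus_INR.
apply: (sparsity_arith rm_pos rm_rp rm_rp1 (pos_INR _) forward_growth _ s_large).
by rewrite -plus_INR; apply/le_INR/leP.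
Qed.

End ForwardStep.

Lemma precision_arith rm rp1 eps n X D M :
  0 < rm -> 0 < rp1 -> 0 < eps -> 0 <= D ->
  eps * eps * X <= 2 * (rp1 * rp1) * n -> rm * rm * n <= eps * eps * D -> D <= M ->
  rm ^ 2 / (8 * rp1 ^ 2) * X <= M.
Proof.
move=> rm_pos rp1_pos eps_pos D_ge0 count far DM.
have P_pos : 0 < rp1 * rp1 * (eps * eps) by apply: Rmult_lt_0_compat; nra.
apply: (Rmult_le_reg_l (8 * (rp1 * rp1) * (eps * eps))); first lra.
have -> : 8 * (rp1 * rp1) * (eps * eps) * (rm ^ 2 / (8 * rp1 ^ 2) * X) =
  rm * rm * (eps * eps * X) by field; lra.
have := Rmult_le_compat_l (rm * rm) _ _ ltac:(nra) count.
have := Rmult_le_compat_l (2 * (rp1 * rp1)) _ _ ltac:(nra) far.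
have := Rmult_le_compat_l _ _ _ (Rlt_le _ _ P_pos) DM.
nra.
Qed.

Lemma output_bounds d (Q : vec d -> R) g s rm rp rm1 rp1 eps (bbar b : vec d)
    (F : {set 'I_d}) :
  RSC Q g 1 rm1 rp1 -> RSC Q g s rm rp -> 0 < rm -> 0 < rp1 ->
  (forall j, j \in supp bbar -> g bbar j = 0) ->
  2 * sqrt 2 * rp1 * norm_inf (g bbar) < eps * rm ->
  restricted_min Q F b -> (#|F| + l0 bbar <= s)%N ->
  (forall j, j \in F -> eps * eps <= 2 * (rp1 * rp1) * (b j * b j)) ->
  norm_inf (g b) < eps ->
  let D := INR #|small_missed rm F bbar eps| in
  norm2 (vsub b bbar) <= 8 * eps ^ 2 / rm ^ 2 * D /\
  Q b - Q bbar <= eps ^ 2 / rm * D /\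
  rm ^ 2 / (8 * rp1 ^ 2) * INR #|F :\: supp bbar| <= INR #|supp bbar :\: F| /\
  INR #|supp bbar :\: F| <= 2 * D.
Proof.
move=> rsc1 rsc_s rm_pos rp1_pos gbar_supp eps_gap b_min card_le b_large stop D.
have eps_pos := gap_eps_pos rm_pos rp1_pos (norm_inf_ge0 _) eps_gap.
have gb_le j : Rabs (g b j) <= eps by apply/Rlt_le/(Rle_lt_trans _ _ _ (norm_inf_ge _ j)).
have grad0 j : j \in F -> g b j = 0 := restricted_min_grad rsc1 rp1_pos b_min (j := j).
have far := dist_bound rsc_s rm_pos b_min.1 grad0 gbar_supp gb_le b_large rp1_pos eps_gap card_le.
have gap := gap_bound rsc_s rm_pos b_min.1 grad0 gb_le card_le.
have missed := missed_bound rsc_s rm_pos b_min.1 grad0 gbar_supp gb_le b_large rp1_pos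
  eps_gap card_le eps_pos.
have count := count_by_norm bbar (k := 2 * (rp1 * rp1)) ltac:(nra) b_large.
have small_le : D <= INR #|supp bbar :\: F|.
  by apply/le_INR/leP/subset_leq_card/subsetP => j; rewrite in_small_missed in_setD => /and3P [-> ->].
rewrite -/D in far gap missed.
have D_ge0 : 0 <= D := pos_INR _.
have ee : 0 < eps * eps by nra.
split; [|split; [|split]].
- apply: (Rmult_le_reg_l (rm * rm)); first nra.
  have -> : rm * rm * (8 * eps ^ 2 / rm ^ 2 * D) = 8 * (eps * eps * D) by field; lra.
  nra.
- apply: (Rmult_le_reg_l (2 * rm)); first lra.
  have -> : 2 * rm * (eps ^ 2 / rm * D) = 2 * (eps * eps * D) by field; lra.
  nra.
- exact: precision_arith rm_pos rp1_pos eps_pos D_ge0 count far small_le.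
- lra.
Qed.

Scheme foba_iter_mut := Induction for foba_iter Sort Prop
with foba_back_mut := Induction for foba_back Sort Prop.

Section Invariant.
Variables (d : nat) (Q : vec d -> R) (g : vec d -> vec d) (s : nat) (rm rp rm1 rp1 eps : R).
Variable bbar : vec d.
Hypothesis rsc1 : RSC Q g 1 rm1 rp1.
Hypothesis rsc_s : RSC Q g s rm rp.
Hypothesis s_pos : (0 < s)%N.
Hypothesis rm_pos : 0 < rm.
Hypothesis rp1_pos : 0 < rp1.
Hypothesis gbar_supp : forall j, j \in supp bbar -> g bbar j = 0.
Hypothesis eps_gap : 2 * sqrt 2 * rp1 * norm_inf (g bbar) < eps * rm.
Hypothesis s_large : INR s - INR (l0 bbar) >
  (INR (l0 bbar) + 1) * ((sqrt (rp / rm) + 1) * (2 * rp1 / rm)) ^ 2.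

Definition iter_inv (F : {set 'I_d}) (b : vec d) (dl : nat -> R) : Prop :=
  [/\ restricted_min Q F b, (#|F| + l0 bbar < s)%N,
      forall m, (0 < m <= #|F|)%N -> eps * eps / (2 * rp1) <= dl m &
      forall j, j \in F -> eps * eps <= 2 * (rp1 * rp1) * (b j * b j)].

(* Inside the backward loop the support may touch s - |supp bbar|, but it is
   strictly below as soon as no coordinate is worth deleting. *)
Definition back_inv (F : {set 'I_d}) (b : vec d) (dl : nat -> R) : Prop :=
  [/\ restricted_min Q F b, (#|F| + l0 bbar <= s)%N,
      forall m, (0 < m <= #|F|)%N -> eps * eps / (2 * rp1) <= dl m &
      (forall j, j \in F -> Q (drop_coord b j) - Q b >= dl #|F| / 2) ->
        (#|F| + l0 bbar < s)%N].

Lemma inv_init : iter_inv set0 (@vzero d) (fun _ => 0).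
Proof.
split.
- split=> [|b' b'0]; first exact: supp_sub.
  have -> : b' = @vzero d by apply: functional_extensionality => j; apply: (supp_zero b'0); rewrite inE.
  exact: Rle_refl.
- rewrite cards0 add0n; apply/ltP/INR_lt; move: s_large; have := pos_INR (l0 bbar).
  have := pow2_ge_0 ((sqrt (rp / rm) + 1) * (2 * rp1 / rm)).
  set W := (_ ^ 2) => W_ge0 K_ge0; have : 0 <= (INR (l0 bbar) + 1) * W by apply: Rmult_le_pos; lra.
  lra.
- by move=> m; rewrite cards0; lia.
- by move=> j; rewrite inE.
Qed.

(* Leaving the backward loop: the recorded gain makes every coordinate eps-large. *)
Lemma inv_exit F b dl :
  back_inv F b dl ->
  (F = set0 \/ forall j, j \in F -> Q (drop_coord b j) - Q b >= dl #|F| / 2) ->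
  iter_inv F b dl.
Proof.
move=> [b_min card_le gains exit_lt] no_drop.
have no_drop' : forall j, j \in F -> Q (drop_coord b j) - Q b >= dl #|F| / 2.
  by case: no_drop => [-> j|//]; rewrite inE.
split=> // [|j jF]; first exact: exit_lt.
apply: (undeletable_large rsc1 rp1_pos b_min jF (Rge_le _ _ (no_drop' j jF))).
by apply: gains; rewrite leqnn andbT; apply/card_gt0P; exists j.
Qed.

Lemma inv_forward F b dl i b' :
  iter_inv F b dl -> ~ norm_inf (g b) < eps -> i \notin F ->
  (forall j, j \notin F -> Rabs (g b j) <= Rabs (g b i)) ->
  restricted_min Q (i |: F) b' ->
  back_inv (i |: F) b' (fun m => if m == #|F|.+1 then Q b - Q b' else dl m).
Proof.
move=> [b_min card_lt gains b_large] not_stop i_new i_max b'_min.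
have card_new : #|i |: F| = #|F|.+1 by rewrite cardsU1 i_new.
have eps_pos := gap_eps_pos rm_pos rp1_pos (norm_inf_ge0 _) eps_gap.
split.
- exact: b'_min.
- by rewrite card_new; move: card_lt; lia.
- move=> m; rewrite card_new => /andP [m_pos m_le].
  case: eqP => [_|/eqP m_ne]; last by apply: gains; rewrite m_pos -ltnS ltn_neqAle m_ne.
  have gi_ge : eps <= Rabs (g b i).
    have := norm_inf_le (Rabs_pos _) (forward_grad_max rsc1 rp1_pos b_min i_max).
    by move/Rnot_lt_le: not_stop; lra.
  have := forward_gain rsc1 rp1_pos (i := i) b_min.1 b'_min; rewrite -abs_sq => gain.
  suff : eps * eps / (2 * rp1) <= Rabs (g b i) * Rabs (g b i) / (2 * rp1) by lra.
  by apply: Rmult_le_compat_r; [apply/Rlt_le/Rinv_0_lt_compat; lra | nra].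
- move=> no_backward; rewrite card_new eqxx in no_backward.
  exact: (forward_keeps_sparse rsc1 rsc_s rm_pos rp1_pos b_min b'_min i_new i_max card_lt
    gbar_supp eps_gap b_large not_stop no_backward s_pos s_large).
Qed.

Lemma inv_backward F b dl j b' :
  back_inv F b dl -> j \in F -> restricted_min Q (F :\ j) b' -> back_inv (F :\ j) b' dl.
Proof.
move=> [_ card_le gains _] jF b'_min.
have card_F : #|F| = #|F :\ j|.+1 by rewrite (cardsD1 j F) jF.
split.
- exact: b'_min.
- by move: card_le; rewrite card_F; lia.
- by move=> m /andP [m_pos m_le]; apply: gains; rewrite m_pos card_F; exact: leqW.
- by move=> _; move: card_le; rewrite card_F; lia.
Qed.

Lemma foba_invariant F b dl : foba_iter Q g eps F b dl -> iter_inv F b dl.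
Proof.
move=> reach.
apply: (@foba_iter_mut d Q g eps (fun F b dl _ => iter_inv F b dl)
  (fun F b dl _ => back_inv F b dl) _ _ _ _ F b dl reach).
- exact: inv_init.
- by move=> F1 b1 dl1 _ inv no_drop; apply: inv_exit inv no_drop.
- move=> F1 b1 dl1 i b2 _ inv not_stop i_new i_max b2_min.
  exact: inv_forward inv not_stop i_new i_max b2_min.
- by move=> F1 b1 dl1 j b2 _ inv jF _ _ b2_min; apply: inv_backward inv jF b2_min.
Qed.

End Invariant.

Unset Implicit Arguments.
Theorem theorem5 (d : nat) (Q : vec d -> R) (g : vec d -> vec d)
  (Qconv : convex Q) (QC1 : C1_with_grad Q g)
  (Hexist : forall F : {set 'I_d}, exists b, restricted_min Q F b)
  (s : nat) (s_pos : (0 < s)%N)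
  (rm_s rp_s rp_1 : R) (rm_s_pos : 0 < rm_s) (rp_s_pos : 0 < rp_s) (rp_1_pos : 0 < rp_1)
  (Hrsc_s : RSC Q g s rm_s rp_s) (Hrsc_1 : exists rm_1, 0 < rm_1 /\ RSC Q g 1 rm_1 rp_1)
  (bbar : vec d)
  (Hbbar : forall b : vec d, (l0 b <= l0 bbar)%N -> Q bbar <= Q b)
  (Hs : INR s - INR (l0 bbar) >
        (INR (l0 bbar) + 1) * ((sqrt (rp_s / rm_s) + 1) * (2 * rp_1 / rm_s)) ^ 2)
  (eps : R)
  (Heps : eps > 2 * sqrt 2 * rp_1 / rm_s * norm_inf (g bbar))
  (F : {set 'I_d}) (b : vec d) (Hout : foba_gdt_output Q g eps F b) :
  let gamma := 2 * sqrt 2 * eps / rm_s in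
  let Fbar := supp bbar in
  let Dbar := INR #|[set j in Fbar :\: F | Rltb (Rabs (bbar j)) gamma]| in
  norm2 (vsub b bbar) <= 8 * eps ^ 2 / rm_s ^ 2 * Dbar /\
  Q b - Q bbar <= eps ^ 2 / rm_s * Dbar /\
  rm_s ^ 2 / (8 * rp_1 ^ 2) * INR #|F :\: Fbar| <= INR #|Fbar :\: F| /\
  INR #|Fbar :\: F| <= 2 * Dbar.
Proof.
have [rm_1 [_ Hrsc_1']] := Hrsc_1.
have [dl [reach stop]] := Hout.
have eps_gap : 2 * sqrt 2 * rp_1 * norm_inf (g bbar) < eps * rm_s.
  have -> : 2 * sqrt 2 * rp_1 * norm_inf (g bbar) =
    2 * sqrt 2 * rp_1 / rm_s * norm_inf (g bbar) * rm_s by field; lra.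
  exact: Rmult_lt_compat_r.
have gbar_supp j : j \in supp bbar -> g bbar j = 0.
  by move=> jF; exact: (sparse_opt_grad Hrsc_1' rp_1_pos Hbbar jF).
have [b_min card_lt _ b_large] :=
  foba_invariant Hrsc_1' Hrsc_s s_pos rm_s_pos rp_1_pos gbar_supp eps_gap Hs reach.
exact: output_bounds Hrsc_1' Hrsc_s rm_s_pos rp_1_pos gbar_supp eps_gap b_min
  (ltnW card_lt) b_large stop.
Qed.
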